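(* Let $r \geq 3$ and $n \geq r+1$ be integers. The index $\lambda_1(\Gamma_{1,r-2})$ is the largest root of the polynomial $$f(x) = x^3 + (3-n)x^2 + (3-n-r)x + (n+4)r - (r^2+n+7),$$ and it satisfies $$n-2 \leq \lambda_1(\Gamma_{1,r-2}) < n-1.$$
   Context: A signed graph is a simple graph with each edge assigned a sign $+1$ or $-1$; its adjacency matrix has entry $\sigma(v_iv_j)$ for adjacent $v_i,v_j$ and $0$ otherwise, and its index $\lambda_1$ is the largest eigenvalue of this matrix. $\Gamma_{1,r-2}$ denotes the signed graph on vertices $v_1,\dots,v_n$ obtained from the all-positive complete graph on $\{v_2,\dots,v_n\}$ by adding the vertex $v_1$ joined by one negative edge $v_1v_2$ and by $r-2$ positive edges $v_1v_3,\dots,v_1v_r$ (and no other edges at $v_1$). *)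

From HB Require Import structures.
From mathcomp Require Import all_boot all_order all_algebra.
Set Implicit Arguments. Unset Strict Implicit. Unset Printing Implicit Defensive.
Import Order.TTheory GRing.Theory Num.Theory.
Local Open Scope ring_scope.

(* Vertices v_1, ..., v_n are the indices 0, ..., n-1 of 'I_n
   (v_k corresponds to index k-1).
   Gamma_{1,r-2}: all-positive complete graph on {v_2..v_n} (indices 1..n-1),
   plus v_1 (index 0) joined negatively to v_2 (index 1) and positively to
   v_3..v_r (indices 2..r-1), and to nothing else. *)
Definition Gamma_adj (R : ringType) (n r : nat) : 'M[R]_n :=
  \matrix_(i < n, j < n)
    if i == j then 0
    else if minn i j == 0%N then
      (if maxn i j == 1%N then -1
       else if (maxn i j < r)%N then 1 else 0)
    else 1.

Definition is_index (R : realFieldType) (n : nat) (A : 'M[R]_n) (lam : R) : Prop :=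
  eigenvalue A lam /\ (forall mu : R, eigenvalue A mu -> mu <= lam).

Definition f_poly (R : ringType) (n r : nat) : {poly R} :=
  'X^3 + (3 - n%:R)%:P * 'X^2 + (3 - n%:R - r%:R)%:P * 'X
  + ((n%:R + 4) * r%:R - (r%:R ^+ 2 + n%:R + 7))%:P.

(* Write c_j for the sign of the edge v_1 v_{j+1} (0 if absent), so that the
   adjacency matrix is [[0, c^T], [c, J - I]] with J - I the clique on
   v_2, ..., v_n.  For an eigenvector x with eigenvalue mu and clique sum W,
   the rows j >= 1 read (mu + 1) x_j = c_j x_0 + W.  Since sum c_j = r - 3 and
   sum c_j^2 = r - 1, summing these rows and substituting them into row 0 gives
     (mu - n + 2) W = (r - 3) x_0   and   (mu^2 + mu - r + 1) x_0 = (r - 3) W,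
   a 2x2 system with determinant f(mu).  So every eigenvalue other than -1 is
   a root of f, and conversely every root of f yields an explicit eigenvector.
   On [n - 2, +oo) both factors of (x - n + 2)(x^2 + x - r + 1) are
   nonnegative and increasing, so f is increasing there, and
   f(n - 2) <= 0 < f(n - 1) locates its largest root, which is the index. *)

From mathcomp Require Import all_boot all_order all_algebra.
From mathcomp Require Import ring lra zify.
Set Implicit Arguments. Unset Strict Implicit. Unset Printing Implicit Defensive.
Import Order.TTheory GRing.Theory Num.Theory.
Local Open Scope ring_scope.

Definition Gamma_entry (R : nzRingType) (r i j : nat) : R :=
  if i == j then 0
  else if minn i j == 0%N then
    (if maxn i j == 1%N then -1 else if (maxn i j < r)%N then 1 else 0)
  else 1.

Lemma Gamma_adjE (R : nzRingType) (n r : nat) (i j : 'I_n) :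
  Gamma_adj R n r i j = Gamma_entry R r i j.
Proof. by rewrite mxE. Qed.

Definition coord (R : nzRingType) (n : nat) (v : 'rV[R]_n) (k : nat) : R :=
  oapp (v 0) 0 (insub k).

Lemma row_coord (R : nzRingType) (n : nat) (v : 'rV[R]_n) :
  \row_(k < n) coord v k = v.
Proof. by apply/rowP => k; rewrite mxE /coord valK. Qed.

Lemma horner_f_poly (R : comNzRingType) (n r : nat) (x : R) :
  (f_poly R n r).[x] =
  (x - n%:R + 2) * (x ^+ 2 + x - r%:R + 1) - (r%:R - 3) ^+ 2.
Proof.
by rewrite /f_poly !(hornerD, hornerM, hornerC, hornerXn, hornerX); ring.
Qed.

Section Entries.
Variables (R : nzRingType) (r : nat).
Local Notation e := (Gamma_entry R r).

Lemma Gamma_entryC i j : e i j = e j i.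
Proof. by rewrite /Gamma_entry eq_sym minnC maxnC. Qed.

Lemma Gamma_entry_diag i : e i i = 0.
Proof. by rewrite /Gamma_entry eqxx. Qed.

Lemma Gamma_entry01 : e 0 1 = -1.
Proof. by []. Qed.

Lemma Gamma_entry_link j : (2 <= j)%N -> e 0 j = if (j < r)%N then 1 else 0.
Proof.
move=> j_ge2; rewrite /Gamma_entry min0n max0n eqxx.
by rewrite ltn_eqF ?gtn_eqF // ltnW.
Qed.

Lemma Gamma_entry_clique i j : (1 <= i)%N -> (1 <= j)%N ->
  e i j = if i == j then 0 else 1.
Proof.
move=> i_gt0 j_gt0; rewrite /Gamma_entry; case: eqP => // _.
by have -> : (minn i j == 0%N) = false by lia.
Qed.

End Entries.

Section EigenEquations.
Variables (R : comNzRingType) (n r : nat).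
Hypotheses (r_ge2 : (2 <= r)%N) (r_lt_n : (r < n)%N).
Local Notation e := (Gamma_entry R r).
Local Notation A := (Gamma_adj R n r).

Lemma sum_Gamma_link (V : nmodType) (G : R -> V) :
  \sum_(1 <= j < n) G (e 0 j) = G (-1) + G 1 *+ (r - 2) + G 0 *+ (n - r).
Proof.
rewrite big_ltn; last lia.
rewrite (big_cat_nat (n := r)) /=; [|lia|lia].
rewrite Gamma_entry01 addrA -!sumr_const_nat.
congr (_ + _ + _); apply: eq_big_nat => j /andP[j_ge j_lt].
  by rewrite Gamma_entry_link // j_lt.
by rewrite Gamma_entry_link ?(leq_trans r_ge2) // ltnNge j_ge.
Qed.

Lemma sum_Gamma_link_affine (a b : R) :
  \sum_(1 <= j < n) (e 0 j * a + b) = (r%:R - 3) * a + (n%:R - 1) * b.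
Proof.
rewrite (sum_Gamma_link (fun c => c * a + b)).
by rewrite -(mulr_natr _ (r - 2)) -(mulr_natr _ (n - r)) !natrB; [ring|lia|lia].
Qed.

Lemma sum_Gamma_link_mul_affine (a b : R) :
  \sum_(1 <= j < n) e 0 j * (e 0 j * a + b) = (r%:R - 1) * a + (r%:R - 3) * b.
Proof.
rewrite (sum_Gamma_link (fun c => c * (c * a + b))).
by rewrite -(mulr_natr _ (r - 2)) -(mulr_natr _ (n - r)) !natrB; [ring|lia|lia].
Qed.

Lemma row_mul_Gamma (x : nat -> R) (j : 'I_n) :
  ((\row_(k < n) x k) *m A) 0 j =
  if j == 0%N :> nat then \sum_(0 <= i < n) e 0 i * x i
  else e 0 j * x 0 + \sum_(1 <= i < n) x i - x j.
Proof.
have -> : ((\row_(k < n) x k) *m A) 0 j = \sum_(0 <= i < n) x i * e i j.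
  by rewrite mxE big_mkord; apply: eq_bigr => i _; rewrite mxE Gamma_adjE.
case: eqP => [-> | /eqP j_neq0].
  by apply: eq_bigr => i _; rewrite mulrC Gamma_entryC.
have j_in : (j : nat) \in index_iota 1 n by rewrite mem_index_iota ltn_ord; lia.
rewrite big_ltn; last lia.
rewrite Gamma_entryC mulrC -addrA; congr (_ + _).
rewrite !(bigD1_seq (j : nat)) ?iota_uniq //= Gamma_entry_diag mulr0 add0r.
rewrite [X in _ = X]addrC addKr big_seq_cond [RHS]big_seq_cond.
apply: eq_bigr => i /andP[i_in /negPf i_neq_j].
move: i_in; rewrite mem_index_iota => /andP[i_gt0 _].
by rewrite Gamma_entry_clique ?i_neq_j ?mulr1 //; lia.
Qed.

Lemma Gamma_eigenE (x : nat -> R) (mu : R) :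
  (\row_(k < n) x k) *m A = mu *: \row_(k < n) x k <->
  mu * x 0 = \sum_(0 <= i < n) e 0 i * x i /\
  (forall j, (1 <= j < n)%N ->
     (mu + 1) * x j = e 0 j * x 0 + \sum_(1 <= i < n) x i).
Proof.
have n_gt0 : (0 < n)%N by lia.
split=> [/rowP eig | [eq0 eqS]].
  split=> [|j /andP[j_gt0 j_lt_n]].
    by have := eig (Ordinal n_gt0); rewrite row_mul_Gamma !mxE /= => ->.
  have := eig (Ordinal j_lt_n); rewrite row_mul_Gamma !mxE /= gtn_eqF // => eqj.
  by rewrite mulrDl mul1r -eqj subrK.
apply/rowP => j; rewrite row_mul_Gamma !mxE.
case: eqP => [j0 | /eqP j_neq0]; first by rewrite j0 eq0.
by rewrite -eqS ?mulrDl ?mul1r ?addrK // lt0n j_neq0 ltn_ord.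
Qed.

Lemma Gamma_eigen_quotient (x : nat -> R) (mu : R) :
  (\row_(k < n) x k) *m A = mu *: \row_(k < n) x k ->
  (mu - n%:R + 2) * \sum_(1 <= i < n) x i = (r%:R - 3) * x 0 /\
  (mu ^+ 2 + mu - r%:R + 1) * x 0 = (r%:R - 3) * \sum_(1 <= i < n) x i.
Proof.
move=> /Gamma_eigenE[eq0 eqS]; set W := \sum_(1 <= i < n) x i in eqS *.
split.
  have sumS : (mu + 1) * W = (r%:R - 3) * x 0 + (n%:R - 1) * W.
    rewrite -sum_Gamma_link_affine mulr_sumr.
    by apply: eq_big_nat => j /eqS.
  by rewrite -[RHS](addrK ((n%:R - 1) * W)) -sumS; ring.
have row0 : (mu + 1) * (mu * x 0) = (r%:R - 1) * x 0 + (r%:R - 3) * W.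
  rewrite eq0 big_ltn; last lia.
  rewrite Gamma_entry_diag mul0r add0r mulr_sumr -sum_Gamma_link_mul_affine.
  by apply: eq_big_nat => i /eqS <-; rewrite mulrCA.
by rewrite -[RHS](addKr ((r%:R - 1) * x 0)) -row0; ring.
Qed.

End EigenEquations.

Section Eigenvalues.
Variables (F : fieldType) (n r : nat).
Hypotheses (r_ge2 : (2 <= r)%N) (r_lt_n : (r < n)%N).
Local Notation e := (Gamma_entry F r).
Local Notation A := (Gamma_adj F n r).
Local Notation f := (f_poly F n r).

Lemma eigenvalue_Gamma_root (mu : F) : eigenvalue A mu -> mu != -1 -> root f mu.
Proof.
case/eigenvalueP => v; rewrite -(row_coord v); set x := coord v => eig nz mu_neq.
have [quo1 quo2] := Gamma_eigen_quotient r_ge2 r_lt_n eig.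
have [_ eqS] := (Gamma_eigenE r_ge2 r_lt_n x mu).1 eig.
set W := \sum_(1 <= i < n) x i in quo1 quo2 eqS.
apply: contraR nz => /rootPf f_neq0.
have [x0 W0] : x 0 = 0 /\ W = 0.
  have fx0 : f.[mu] * x 0 = 0.
    rewrite horner_f_poly; transitivity ((mu - n%:R + 2) *
      ((mu ^+ 2 + mu - r%:R + 1) * x 0) - (r%:R - 3) * ((r%:R - 3) * x 0)).
      by ring.
    by rewrite quo2 -quo1; ring.
  have fW : f.[mu] * W = 0.
    rewrite horner_f_poly; transitivity ((mu ^+ 2 + mu - r%:R + 1) *
      ((mu - n%:R + 2) * W) - (r%:R - 3) * ((r%:R - 3) * W)).
      by ring.
    by rewrite quo1 -quo2; ring.
  by move: fx0 fW => /eqP + /eqP; rewrite !mulf_eq0 f_neq0 => /eqP ? /eqP.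
have mu1_neq0 : mu + 1 != 0 by rewrite addr_eq0.
apply/eqP/rowP => j; rewrite !mxE.
have [j0 | j_neq0] := eqVneq (j : nat) 0%N; first by rewrite j0.
have j_range : (1 <= j < n)%N by rewrite lt0n j_neq0 ltn_ord.
move/eqP: (eqS j j_range); rewrite x0 W0 mulr0 addr0 mulf_eq0 (negPf mu1_neq0).
by move/eqP.
Qed.

Lemma root_eigenvalue_Gamma (lam : F) :
  root f lam -> lam ^+ 2 + lam - r%:R + 1 != 0 -> eigenvalue A lam.
Proof.
move=> /rootP; rewrite horner_f_poly => f_lam s_neq0.
(* With W = (lam + 1) s(lam), the quotient system forces x_0 = (lam + 1)(r - 3),
   and row j then gives x_j. *)
pose x (j : nat) : F := if j == 0%N then (lam + 1) * (r%:R - 3)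
  else e 0 j * (r%:R - 3) + (lam ^+ 2 + lam - r%:R + 1).
have xS : forall j, (1 <= j)%N ->
    x j = e 0 j * (r%:R - 3) + (lam ^+ 2 + lam - r%:R + 1).
  by move=> j j_gt0; rewrite /x gtn_eqF.
have W_eq : \sum_(1 <= i < n) x i = (lam + 1) * (lam ^+ 2 + lam - r%:R + 1).
  rewrite (eq_big_nat _ _ (fun i (i_in : (1 <= i < n)%N) => xS i (andP i_in).1)).
  by rewrite sum_Gamma_link_affine // -[RHS]subr0 -f_lam; ring.
apply/eigenvalueP; exists (\row_(k < n) x k).
  apply/Gamma_eigenE => //; split=> [|j /andP[j_gt0 _]].
    rewrite big_ltn ?Gamma_entry_diag ?mul0r ?add0r; last lia.
    rewrite (eq_big_nat _ _ (fun i (i_in : (1 <= i < n)%N) =>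
      congr1 (fun y => e 0 i * y) (xS i (andP i_in).1))).
    by rewrite sum_Gamma_link_mul_affine // /x /=; ring.
  by rewrite W_eq xS // /x /=; ring.
apply/eqP => /rowP /(_ (Ordinal r_lt_n)); rewrite !mxE xS ?(ltnW r_ge2) //=.
by rewrite Gamma_entry_link // ltnn mul0r add0r => /eqP; rewrite (negPf s_neq0).
Qed.

End Eigenvalues.

Section Index.
Variables (R : realFieldType) (n r : nat).
Hypotheses (r_ge2 : (2 <= r)%N) (r_lt_n : (r < n)%N).
Local Notation f := (f_poly R n r).

Let r_boundsR : 2 <= r%:R :> R /\ r%:R + 1 <= n%:R :> R.
Proof. by rewrite natr1 !ler_nat. Qed.

Lemma f_poly_quadratic_factor_gt0 (x : R) :
  n%:R - 2 <= x -> 0 < x ^+ 2 + x - r%:R + 1.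
Proof. by move=> x_ge; have [? ?] := r_boundsR; nra. Qed.

Lemma f_poly_increasing (x y : R) : n%:R - 2 <= x -> x < y -> f.[x] < f.[y].
Proof.
move=> x_ge x_lt_y; rewrite !horner_f_poly ltrD2r.
have [? ?] := r_boundsR.
have s_x_gt0 := f_poly_quadratic_factor_gt0 x_ge.
have s_incr : x ^+ 2 + x - r%:R + 1 < y ^+ 2 + y - r%:R + 1 by nra.
have g_x_ge0 : 0 <= x - n%:R + 2 by lra.
nra.
Qed.

Lemma f_poly_gt0_at_n_sub1 : 0 < f.[n%:R - 1].
Proof. by rewrite horner_f_poly; have [? ?] := r_boundsR; nra. Qed.

Lemma f_poly_root_le (lam x : R) :
  n%:R - 2 <= lam -> root f lam -> root f x -> x <= lam.
Proof.
move=> lam_ge /rootP f_lam /rootP f_x; rewrite leNgt; apply/negP => lam_lt_x.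
by have := f_poly_increasing lam_ge lam_lt_x; rewrite f_lam f_x ltxx.
Qed.

Lemma is_index_Gamma (lam : R) :
  n%:R - 2 <= lam -> root f lam -> is_index (Gamma_adj R n r) lam.
Proof.
move=> lam_ge f_lam; split.
  by apply: root_eigenvalue_Gamma => //; rewrite gt_eqF ?f_poly_quadratic_factor_gt0.
move=> mu eig_mu; have [//|lam_lt_mu] := leP mu lam.
have mu_neq : mu != -1 by apply/eqP => mu_eq; have [? ?] := r_boundsR; lra.
have f_mu := eigenvalue_Gamma_root r_ge2 r_lt_n eig_mu mu_neq.
by have := f_poly_root_le lam_ge f_lam f_mu; rewrite leNgt lam_lt_mu.
Qed.

End Index.

Theorem proposition1p9 (R : rcfType) (n r : nat) :
  (3 <= r)%N -> (r + 1 <= n)%N ->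
  exists lam : R,
    is_index (Gamma_adj R n r) lam /\
    (root (f_poly R n r) lam /\
     (forall x : R, root (f_poly R n r) x -> x <= lam)) /\
    (n%:R - 2 <= lam /\ lam < n%:R - 1).
Proof.
move=> r_ge3 r1_le_n.
have r_ge2 : (2 <= r)%N by lia.
have r_lt_n : (r < n)%N by lia.
have f_gt0 := f_poly_gt0_at_n_sub1 R r_ge2 r_lt_n.
have [lam /andP[lam_ge lam_le] f_lam] :
    exists2 lam : R, n%:R - 2 <= lam <= n%:R - 1 & root (f_poly R n r) lam.
  apply: poly_ivt; first lra.
  rewrite (ltW f_gt0) andbT horner_f_poly.
  have -> : n%:R - 2 - n%:R + 2 = 0 :> R by ring.
  by rewrite mul0r sub0r oppr_le0 sqr_ge0.
exists lam; split; first exact: is_index_Gamma.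
split; first by split=> // x; apply: f_poly_root_le.
split=> //; rewrite lt_neqAle lam_le andbT.
by apply: contraTneq f_lam => ->; rewrite /root gt_eqF.
Qed.
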